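(* Let $0\le q<d$ and let $X,Y$ be cubical sets in $\mathbb{R}^d$ such that the symmetric difference $X\triangle Y$ is bounded. Then there exists $\Delta_\infty\in\mathbb{Z}$ such that for every sequence of boxes $A_n=x_n+[-m_n,m_n]^d$ ($x_n\in\mathbb{Z}^d$, $m_n\in\mathbb{N}$) whose lattice point sets satisfy $\liminf_n (A_n\cap\mathbb{Z}^d)=\mathbb{Z}^d$ (i.e. every $z\in\mathbb{Z}^d$ lies in $A_n$ for all sufficiently large $n$), there exists $n_\infty\in\mathbb{N}$ such that $$\beta_q(X\cap A_n)-\beta_q(Y\cap A_n)=\Delta_\infty\quad\text{for all }n\ge n_\infty.$$
   Context: An elementary interval is $[l,l+1]$ or $[l]=[l,l]$ with $l\in\mathbb{Z}$; an elementary cube in $\mathbb{R}^d$ is a product of $d$ elementary intervals, of dimension equal to the number of nondegenerate factors. A cubical set is a (possibly infinite) union of elementary cubes; the intersection of a cubical set with a box $x+[-m,m]^d$, $x\in\mathbb{Z}^d$, is a bounded cubical set. For a cubical set $X$, $C_k(X)$ is the free $\mathbb{Z}$-module on the $k$-dimensional elementary cubes contained in $X$, with the standard cubical boundary operator $\partial\widehat Q=\sum_{j=1}^k(-1)^{j-1}(\widehat{Q_j^+}-\widehat{Q_j^-})$; $H_k(X)$ is the resulting homology, and for bounded $X$, $\beta_k(X)$ is the rank of the free part of $H_k(X)$. *)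

From Stdlib Require Import Reals.
From HB Require Import structures.
From mathcomp Require Import all_boot all_order all_algebra.
From mathcomp Require Import Rstruct.
Set Implicit Arguments. Unset Strict Implicit. Unset Printing Implicit Defensive.
Import Order.TTheory GRing.Theory Num.Theory.
Local Open Scope ring_scope.

Definition pt (d : nat) := 'I_d -> R.
Definition rset (d : nat) := pt d -> Prop.

(** Elementary interval [l, l+b] (b = true: nondegenerate [l,l+1]; b = false: [l]). *)
Definition einterval := (int * bool)%type.
Definition intv_pts (I : einterval) (x : R) : Prop :=
  (I.1)%:~R <= x /\ x <= (I.1 + (I.2 : nat)%:Z)%:~R.

Definition ecube (d : nat) := {ffun 'I_d -> einterval}.
Definition cube_pts d (Q : ecube d) : rset d := fun x => forall i, intv_pts (Q i) (x i).
Definition cube_dim d (Q : ecube d) : nat := #|[set i : 'I_d | (Q i).2]|.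

Definition cubical d (X : rset d) : Prop :=
  exists K : ecube d -> Prop, forall x, X x <-> exists Q, K Q /\ cube_pts Q x.

Definition bounded_set d (X : rset d) : Prop :=
  exists M : R, forall x, X x -> forall i, `|x i| <= M.

Definition setI_r d (X Y : rset d) : rset d := fun x => X x /\ Y x.
Definition symdiff d (X Y : rset d) : rset d :=
  fun x => (X x /\ ~ Y x) \/ (Y x /\ ~ X x).

Definition box d (x : 'I_d -> int) (m : nat) : rset d :=
  fun p => forall i, (x i - m%:Z)%:~R <= p i /\ p i <= (x i + m%:Z)%:~R.
Definition lattice_pt d (z : 'I_d -> int) : pt d := fun i => (z i)%:~R.

(** Chains: finite formal Z-linear combinations of elementary cubes. *)
Definition chain d := seq (int * ecube d).
Definition coef d (c : chain d) (P : ecube d) : int :=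
  \sum_(p <- c | p.2 == P) p.1.

Definition face d (Q : ecube d) (i : 'I_d) (up : bool) : ecube d :=
  [ffun t => if t == i then ((Q i).1 + (up : nat)%:Z, false) else Q t].
(** Position (0-based) of coordinate i among the nondegenerate factors. *)
Definition nd_before d (Q : ecube d) (i : 'I_d) : nat :=
  #|[set t : 'I_d | (nat_of_ord t < nat_of_ord i)%N && (Q t).2]|.
(** Cubical boundary of an elementary cube:
    sum_j (-1)^(j-1) (Q_j^+ - Q_j^-). *)
Definition cube_bd d (Q : ecube d) : chain d :=
  flatten [seq (if (Q i).2 then
                 [:: ((-1) ^+ nd_before Q i, face Q i true);
                     (- (-1) ^+ nd_before Q i, face Q i false)]
               else [::]) | i <- enum 'I_d].
Definition bd d (c : chain d) : chain d :=
  flatten [seq [seq (p.1 * s.1, s.2) | s <- cube_bd p.2] | p <- c].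

Definition is_chain d (X : rset d) (k : nat) (c : chain d) : Prop :=
  forall p, p \in c -> cube_dim p.2 = k /\ (forall x, cube_pts p.2 x -> X x).
Definition is_cycle d (X : rset d) (k : nat) (z : chain d) : Prop :=
  is_chain X k z /\ forall P, coef (bd z) P = 0.
Definition is_boundary d (X : rset d) (k : nat) (c : chain d) : Prop :=
  exists b, is_chain X k.+1 b /\ forall P, coef c P = coef (bd b) P.

Definition lincomb d (cs : seq int) (zs : seq (chain d)) : chain d :=
  flatten [seq [seq (cz.1 * p.1, p.2) | p <- cz.2] | cz <- zip cs zs].

Definition indep_hom d (X : rset d) (k : nat) (zs : seq (chain d)) : Prop :=
  (forall z, z \in zs -> is_cycle X k z) /\
  forall cs : seq int, size cs = size zs ->
    is_boundary X k (lincomb cs zs) -> forall c, c \in cs -> c = 0.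

(** r = beta_k(X), the rank of (the free part of) H_k(X):
    the maximal number of Z-independent homology classes. *)
Definition is_betti d (X : rset d) (k : nat) (r : nat) : Prop :=
  (exists zs, size zs = r /\ indep_hom X k zs) /\
  (forall zs, indep_hom X k zs -> (size zs <= r)%N).

From Stdlib Require Import Reals.
From mathcomp Require Import all_boot all_order all_algebra.
From mathcomp Require Import Rstruct boolp.
From mathcomp Require Import ring zify lra.

Set Implicit Arguments. Unset Strict Implicit. Unset Printing Implicit Defensive.
Import Order.TTheory GRing.Theory Num.Theory.
Local Open Scope ring_scope.

(* Let W = X ∩ Y.  Homology only involves the elementary cubes contained in a set,
   and the cubes contained in X but not in W form a finite family F lying in a fixed
   box K (likewise for Y).  Over Q, beta_q(S) = rank Z_q(S) - rank B_q(S): integral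
   independence of homology classes is rational independence after clearing
   denominators.  For a box A containing K, the cycles of W ∩ A are the cycles of
   X ∩ A vanishing on F, and the boundaries of X ∩ A are those of W ∩ A plus the
   boundaries d(F_{q+1}) of the (q+1)-cubes of F, whence
     beta_q(X ∩ A) - beta_q(W ∩ A)
       = rank (Z_q(X ∩ A) restricted to F) - rank d(F_{q+1})
         + rank (B_q(W ∩ A) ∩ d(F_{q+1})).
   This integer is nondecreasing in A and bounded by |F|, hence constant on all boxes
   containing some box A1; subtracting the analogous constant for Y gives Delta. *)

Section Chains.
Variable d : nat.
Implicit Types (c : chain d) (P Q : ecube d) (i j : 'I_d).

Lemma coef_cat c1 c2 P : coef (c1 ++ c2) P = coef c1 P + coef c2 P.
Proof. by rewrite /coef big_cat. Qed.

Lemma coef_flatten (cs : seq (chain d)) P :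
  coef (flatten cs) P = \sum_(c <- cs) coef c P.
Proof. by rewrite /coef big_flatten. Qed.

Definition scalec (a : int) c : chain d := [seq (a * p.1, p.2) | p <- c].

Lemma coef_scalec a c P : coef (scalec a c) P = a * coef c P.
Proof. by rewrite /coef big_map mulr_sumr. Qed.

Lemma coef_bd c P : coef (bd c) P = \sum_(p <- c) p.1 * coef (cube_bd p.2) P.
Proof. by rewrite /bd coef_flatten big_map; apply: eq_bigr => p _; apply: coef_scalec. Qed.

Lemma coef_lincomb cs (zs : seq (chain d)) P : size cs = size zs ->
  coef (lincomb cs zs) P = \sum_(k < size zs) cs`_k * coef (nth [::] zs k) P.
Proof.
rewrite /lincomb coef_flatten big_map.
elim: zs cs => [|z zs IH] [|a cs] //=; first by rewrite big_nil big_ord0.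
by move=> [hs]; rewrite big_cons big_ord_recl coef_scalec IH.
Qed.

Lemma coef_lincomb_scale a cs (zs : seq (chain d)) P :
  coef (lincomb [seq a * x | x <- cs] zs) P = a * coef (lincomb cs zs) P.
Proof.
have coef_nil : coef ([::] : chain d) P = 0 by rewrite /coef big_nil.
elim: zs cs => [|z zs IH] [|x cs]; rewrite /lincomb /= ?coef_nil ?mulr0 //.
by rewrite !coef_cat -!/(lincomb _ _) -!/(scalec _ _) IH !coef_scalec mulrDr -mulrA.
Qed.

Definition face_sign Q i (u : bool) : int :=
  (if u then 1 else -1) * (-1) ^+ nd_before Q i.

Lemma big_cube_bd Q (F : int * ecube d -> int) : \sum_(p <- cube_bd Q) F p =
  \sum_i \sum_(u : bool) (if (Q i).2 then F (face_sign Q i u, face Q i u) else 0).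
Proof.
rewrite /cube_bd big_flatten big_map big_enum /=; apply: eq_bigr => i _.
rewrite big_bool /=; case: (Q i).2; last by rewrite big_nil addr0.
by rewrite !big_cons big_nil addr0 /face_sign mul1r mulN1r.
Qed.

Lemma coef_cube_bd Q P : coef (cube_bd Q) P =
  \sum_i \sum_(u : bool) (if (Q i).2 && (face Q i u == P) then face_sign Q i u else 0).
Proof.
rewrite /coef big_mkcond big_cube_bd; apply: eq_bigr => i _; apply: eq_bigr => u _.
by case: (Q i).2.
Qed.

Lemma face_nondeg Q i u j : (face Q i u j).2 = (j != i) && (Q j).2.
Proof. by rewrite /face ffunE; case: (j == i). Qed.

Lemma faceC Q i j u v : i != j -> face (face Q i u) j v = face (face Q j v) i u.
Proof.
move=> ij; apply/ffunP => t; rewrite !ffunE.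
have [->|_] := eqVneq t i; first by rewrite (negbTE ij).
by case: eqP => // _; rewrite eq_sym (negbTE ij).
Qed.

Lemma nd_before_face Q i j u : i != j -> (Q i).2 ->
  nd_before Q j = (nd_before (face Q i u) j + (i < j))%N.
Proof.
move=> ij Qi; rewrite /nd_before (cardsD1 i) inE Qi andbT addnC; congr (_ + _)%N.
by apply: eq_card => t; rewrite !inE face_nondeg; case: (t == i); rewrite ?andbF.
Qed.

(* Removing the factors i and j in either order counts the same nondegenerate
   factors except one, whence the opposite signs. *)
Lemma face_sign_swap Q i j u v : i != j -> (Q i).2 -> (Q j).2 ->
  face_sign Q i u * face_sign (face Q i u) j v =
  - (face_sign Q j v * face_sign (face Q j v) i u).
Proof.
move=> ij Qi Qj; have ji : j != i by rewrite eq_sym.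
rewrite /face_sign (nd_before_face u ij Qi) (nd_before_face v ji Qj).
case: (ltngtP i j) => [lt|gt|/val_inj e]; last by rewrite e eqxx in ij.
- by rewrite addn0 addn1 exprS; ring.
- by rewrite addn0 addn1 exprS; ring.
Qed.

Lemma coef_bd_cube_bd Q P : coef (bd (cube_bd Q)) P = 0.
Proof.
pose T (a b : 'I_d * bool) : int :=
  if [&& (Q a.1).2, (face Q a.1 a.2 b.1).2 & face (face Q a.1 a.2) b.1 b.2 == P]
  then face_sign Q a.1 a.2 * face_sign (face Q a.1 a.2) b.1 b.2 else 0.
have -> : coef (bd (cube_bd Q)) P = \sum_a \sum_b T a b.
  rewrite coef_bd big_cube_bd pair_bigA; apply: eq_bigr => -[i u] _ /=.
  case: (boolP (Q i).2) => Qi; last by rewrite big1 // => b _; rewrite /T (negbTE Qi).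
  rewrite coef_cube_bd pair_bigA mulr_sumr; apply: eq_bigr => -[j v] _.
  by rewrite /T Qi /=; case: ifP; rewrite ?mulr0.
have T_anti a b : T a b = - T b a.
  case: a b => [i u] [j v]; rewrite /T /= !face_nondeg.
  have [->|ji] := eqVneq j i; first by rewrite /= andbF oppr0.
  have ij : i != j by rewrite eq_sym.
  case Qi: (Q i).2; case Qj: (Q j).2; rewrite /= ?oppr0 //.
  by rewrite faceC //; case: eqP; rewrite ?oppr0 // => _; apply: face_sign_swap.
set S := \sum_a _; suff : S = - S by lia.
rewrite {1}/S exchange_big -sumrN; apply: eq_bigr => b _; rewrite -sumrN.
by apply: eq_bigr => a _; rewrite T_anti.
Qed.

Definition cube_in (S : rset d) Q : Prop := forall x, cube_pts Q x -> S x.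
Definition chain_in (S : rset d) c : Prop := forall p, p \in c -> cube_in S p.2.
Definition kcube (F : ecube d -> Prop) k Q : Prop := cube_dim Q = k /\ F Q.

Lemma cube_in_face S Q i u : (Q i).2 -> cube_in S Q -> cube_in S (face Q i u).
Proof.
move=> Qi QS x hx; apply: QS => t; move: (hx t); rewrite /face /intv_pts ffunE.
have [->|_] := eqVneq t i => //= -[h1 h2]; rewrite Qi; split.
- by apply: le_trans h1; rewrite ler_int lerDl.
- by apply: (le_trans h2); rewrite ler_int addr0 lerD2l; case: (u).
Qed.

Lemma cube_dim_face Q i u : (Q i).2 -> cube_dim Q = (cube_dim (face Q i u)).+1.
Proof.
move=> Qi; rewrite /cube_dim (cardsD1 i) inE Qi add1n; congr _.+1.
by apply: eq_card => t; rewrite !inE face_nondeg; case: (t == i).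
Qed.

Lemma mem_cube_bd Q p : p \in cube_bd Q -> exists i u, (Q i).2 /\ p.2 = face Q i u.
Proof.
move/flattenP => [s /mapP[i _ ->]]; case: (boolP (Q i).2) => // Qi.
by rewrite !inE => /orP[] /eqP ->; [exists i, true | exists i, false].
Qed.

Lemma kcube_cube_bd S k Q p :
  kcube (cube_in S) k.+1 Q -> p \in cube_bd Q -> kcube (cube_in S) k p.2.
Proof.
move=> [dimQ QS] /mem_cube_bd[i [u [Qi ->]]]; split; last exact: cube_in_face.
by move: dimQ; rewrite (cube_dim_face u Qi) => -[].
Qed.

Lemma chain_in_bd S c : chain_in S c -> chain_in S (bd c).
Proof.
move=> cS p /flattenP[s /mapP[p' p'c ->]] /mapP[p'' /mem_cube_bd[i [u [Qi ->]]] ->].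
exact: cube_in_face (cS _ p'c).
Qed.

Lemma chain_in_lincomb S cs (zs : seq (chain d)) :
  (forall z, z \in zs -> chain_in S z) -> chain_in S (lincomb cs zs).
Proof.
elim: zs cs => [|z zs IH] [|a cs] zsS p //=; rewrite mem_cat => /orP[/mapP[p' p'z ->]|].
  exact: zsS (mem_head _ _) _ p'z.
by apply: IH => z' z'zs; apply: zsS; rewrite inE z'zs orbT.
Qed.
End Chains.

Section CoordMx.
Context {F : fieldType} {n : nat}.
Implicit Types (p : pred 'I_n) (v : 'rV[F]_n).

Definition coord_mx p : 'M[F]_n := \matrix_(i, j) ((i == j) && p i)%:R.

Lemma eq_coord_mx p1 p2 : p1 =1 p2 -> coord_mx p1 = coord_mx p2.
Proof. by move=> e; apply/matrixP => i j; rewrite !mxE e. Qed.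

Lemma row_coord_mx_mul m p i (A : 'M[F]_(n, m)) :
  row i (coord_mx p) *m A = (p i)%:R *: row i A.
Proof.
apply/rowP => j; rewrite !mxE (bigD1 i) //= big1 ?addr0; first by rewrite !mxE eqxx.
by move=> k ki; rewrite !mxE eq_sym (negbTE ki) mul0r.
Qed.

Lemma mul_coord_mx p v j : (v *m coord_mx p) 0 j = v 0 j * (p j)%:R.
Proof.
rewrite !mxE (bigD1 j) //= big1 ?addr0; first by rewrite mxE eqxx.
by move=> i ij; rewrite mxE (negbTE ij) mulr0.
Qed.

Lemma coord_mx_subP p v : reflect (forall j, ~~ p j -> v 0 j = 0) (v <= coord_mx p)%MS.
Proof.
apply: (iffP idP) => [/submxP[w ->] j /negbTE pj | v0]; first by rewrite mul_coord_mx pj mulr0.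
suff -> : v = v *m coord_mx p by apply: submxMl.
by apply/rowP => j; rewrite mul_coord_mx; case: (boolP (p j)) => pj; rewrite ?mulr1 // v0 ?mulr0.
Qed.

Lemma row_coord_mx_sub p1 p2 i : (p1 i -> p2 i) -> (row i (coord_mx p1) <= coord_mx p2)%MS.
Proof.
move=> h; apply/coord_mx_subP => j p2j; rewrite !mxE.
by case: eqP => //= ij; rewrite -ij in p2j; rewrite (contraNF h p2j).
Qed.

Lemma coord_mxS p1 p2 : {subset p1 <= p2} -> (coord_mx p1 <= coord_mx p2)%MS.
Proof. by move=> h; apply/row_subP => i; apply: row_coord_mx_sub; apply: h. Qed.

Lemma coord_mx_predU p1 p2 : (coord_mx [predU p1 & p2] :=: coord_mx p1 + coord_mx p2)%MS.
Proof.
apply/eqmxP/andP; split; last first.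
  by rewrite addsmx_sub !coord_mxS // => j; rewrite !inE => ->; rewrite ?orbT.
apply/row_subP => i; case: (boolP (p1 i)) => p1i.
  by apply: submx_trans (addsmxSl _ _); apply: row_coord_mx_sub.
by apply: submx_trans (addsmxSr _ _); apply: row_coord_mx_sub => /orP[/(negP p1i)|].
Qed.

Lemma sub_coord_mxI p1 p2 v :
  (v <= coord_mx p1)%MS && (v <= coord_mx p2)%MS = (v <= coord_mx [predI p1 & p2])%MS.
Proof.
apply/andP/coord_mx_subP => [[/coord_mx_subP v1 /coord_mx_subP v2] j | v12].
  by rewrite inE negb_and => /orP[/v1|/v2].
by split; apply/coord_mx_subP => j pj; apply: v12; rewrite inE negb_and pj ?orbT.
Qed.

Lemma mul_coord_mx_eq0 p v : (v *m coord_mx p == 0) = (v <= coord_mx (predC p))%MS.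
Proof.
apply/eqP/coord_mx_subP => [v0 j pj | v0]; last first.
  apply/rowP => j; rewrite mul_coord_mx mxE; case: (boolP (p j)) => pj; last by rewrite mulr0.
  by rewrite v0 ?mul0r // negbK.
have := congr1 (fun w : 'rV_n => w 0 j) v0.
by rewrite /= mul_coord_mx mxE; move: pj; rewrite inE negbK => ->; rewrite mulr1.
Qed.

Lemma rank_coord_mx p : (\rank (coord_mx p) <= #|p|)%N.
Proof.
have sub : (coord_mx p <= \sum_(j | p j) (delta_mx j j : 'M[F]_n))%MS.
  apply/row_subP => i; case: (boolP (p i)) => pi.
    have -> : row i (coord_mx p) = row i (delta_mx i i).
      by apply/rowP => j; rewrite !mxE eqxx pi andbT eq_sym.
    exact: submx_trans (row_sub _ _) (sumsmx_sup i _ _).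
  have -> : row i (coord_mx p) = 0 by apply/rowP => j; rewrite !mxE (negbTE pi) andbF.
  exact: sub0mx.
apply: leq_trans (mxrankS sub) _; apply: leq_trans (mxrank_sum_leqif _) _.
by rewrite /= -sum1_card; apply: leq_sum => j _; rewrite mxrank_delta.
Qed.

End CoordMx.

Section IndepMod.
Variables (F : fieldType) (n : nat).

Definition indep_mod m m' (M : 'M[F]_(m, n)) (B : 'M[F]_(m', n)) : Prop :=
  forall w : 'rV_m, (w *m M <= B)%MS -> w = 0.

Lemma indep_mod_rank_leq m m1 m2 (M : 'M[F]_(m, n)) (Z : 'M_(m1, n)) (B : 'M_(m2, n)) :
  (M <= Z)%MS -> (B <= Z)%MS -> indep_mod M B -> (m <= \rank Z - \rank B)%N.
Proof.
move=> MZ BZ indM.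
have /eqP rankM : row_free M.
  by apply: inj_row_free => w wM0; apply: indM; rewrite wM0 sub0mx.
have capMB : \rank (M :&: B)%MS = 0%N.
  apply/eqP; rewrite mxrank_eq0; apply/eqP/row_matrixP => i; rewrite row0.
  have /submxP[w ew] : (row i (M :&: B) <= M)%MS := submx_trans (row_sub _ _) (capmxSl _ _).
  by rewrite ew (indM w) ?mul0mx // -ew (submx_trans (row_sub _ _) (capmxSr _ _)).
have sumMB : (M + B <= Z)%MS by rewrite addsmx_sub MZ.
have := mxrank_sum_cap M B; have := mxrankS sumMB; rewrite capMB rankM; lia.
Qed.

Lemma indep_mod_row_base_diff m1 m2 (Z : 'M[F]_(m1, n)) (B : 'M_(m2, n)) :
  indep_mod (row_base (Z :\: B)%MS) B.
Proof.
move=> w wB; apply: (row_free_inj (row_base_free (Z :\: B)%MS)); rewrite mul0mx.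
apply/eqP; rewrite -submx0 -(capmx_diff Z B) sub_capmx wB andbT.
by rewrite -(eq_row_base (Z :\: B)%MS) submxMl.
Qed.

Lemma mxrank_diff_sub m1 m2 (Z : 'M[F]_(m1, n)) (B : 'M_(m2, n)) :
  (B <= Z)%MS -> \rank (Z :\: B)%MS = (\rank Z - \rank B)%N.
Proof. by move=> BZ; rewrite -(mxrank_cap_compl Z B) (capmx_idPr BZ) addKn. Qed.

End IndepMod.

Lemma int_row_scale n (v : 'rV[rat]_n) :
  exists2 a : int, 0 < a & exists z : 'I_n -> int, a%:~R *: v = \row_j (z j)%:~R.
Proof.
exists (\prod_j denq (v 0 j)); first by apply: prodr_gt0 => j _; apply: denq_gt0.
exists (fun j => numq (v 0 j) * \prod_(i | i != j) denq (v 0 i)).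
by apply/rowP => j; rewrite !mxE (bigD1 j) //= !intrM numqE; ring.
Qed.

Section Coordinates.
Variables (d : nat) (U : seq (ecube d)).
Hypothesis U_uniq : uniq U.
Local Notation n := (size U).
Implicit Types (c : chain d) (P Q : ecube d).

Definition cube_at (j : 'I_n) : ecube d := tnth (in_tuple U) j.

Lemma cube_at_inj : injective cube_at.
Proof. exact/tuple_uniqP. Qed.

Lemma cube_atP Q : Q \in U -> exists j, cube_at j = Q.
Proof. by move=> /(tnthP (in_tuple U))[j ->]; exists j. Qed.

Definition chain_vec c : 'rV[rat]_n := \row_j (coef c (cube_at j))%:~R.
Definition bd_mx : 'M[rat]_n := \matrix_(i, j) (coef (cube_bd (cube_at i)) (cube_at j))%:~R.
Definition cells (F : ecube d -> Prop) : pred 'I_n := fun j => `[< F (cube_at j) >].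

Lemma card_cells F (L : seq (ecube d)) : (forall Q, F Q -> Q \in L) -> (#|cells F| <= size L)%N.
Proof.
move=> FL; rewrite cardE -(size_map cube_at); apply: uniq_leq_size.
  by rewrite (map_inj_uniq cube_at_inj) enum_uniq.
by move=> _ /mapP[j + ->]; rewrite mem_enum => /asboolP; apply: FL.
Qed.

(* Cubes with coefficient 0 are dropped: [is_chain] constrains every listed cube. *)
Definition chain_of (z : 'I_n -> int) : chain d :=
  [seq (z j, cube_at j) | j <- enum 'I_n & z j != 0].

Lemma coef_chain_of z j : coef (chain_of z) (cube_at j) = z j.
Proof.
rewrite /coef big_map big_filter_cond big_enum_cond big_mkcond (bigD1 j) //= eqxx andbT.
rewrite big1 ?addr0 => [|i ij]; first by case: eqP.
by rewrite (inj_eq cube_at_inj) (negbTE ij) andbF.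
Qed.

Lemma chain_vec_chain_of z : chain_vec (chain_of z) = \row_j (z j)%:~R.
Proof. by apply/rowP => j; rewrite !mxE coef_chain_of. Qed.

Lemma chain_vec_scalec a c : chain_vec (scalec a c) = a%:~R *: chain_vec c.
Proof. by apply/rowP => j; rewrite !mxE coef_scalec intrM. Qed.

Lemma chain_vec_lincomb cs (zs : seq (chain d)) : size cs = size zs ->
  chain_vec (lincomb cs zs) = \sum_(k < size zs) (cs`_k)%:~R *: chain_vec (nth [::] zs k).
Proof.
move=> hs; apply/rowP => j; rewrite mxE coef_lincomb // summxE rmorph_sum.
by apply: eq_bigr => k _; rewrite !mxE rmorphM.
Qed.

Section Support.
Variable S : rset d.
Hypothesis S_in_U : forall Q, cube_in S Q -> Q \in U.

Lemma coef_notin c P : chain_in S c -> P \notin U -> coef c P = 0.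
Proof.
move=> cS PU; rewrite /coef big1_seq // => p /andP[/eqP pP pc].
by move: PU; rewrite -pP (S_in_U (cS p pc)).
Qed.

Lemma chain_vec_inj c1 c2 : chain_in S c1 -> chain_in S c2 ->
  chain_vec c1 = chain_vec c2 -> forall P, coef c1 P = coef c2 P.
Proof.
move=> c1S c2S e P; have [PU | PU] := boolP (P \in U); last by rewrite !coef_notin.
have [j <-] := cube_atP PU.
by apply: (@intr_inj rat); have := congr1 (fun v : 'rV_n => v 0 j) e; rewrite !mxE.
Qed.

Lemma sum_coef_cube_at c (h : ecube d -> rat) : chain_in S c ->
  \sum_j (coef c (cube_at j))%:~R * h (cube_at j) = \sum_(p <- c) (p.1)%:~R * h p.2.
Proof.
move=> cS; under eq_bigr => j _ do rewrite /coef rmorph_sum mulr_suml big_mkcond /=.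
rewrite exchange_big /=; apply: eq_big_seq => p pc.
have [i <-] := cube_atP (S_in_U (cS p pc)).
rewrite (bigD1 i) //= eqxx big1 ?addr0 // => k ki.
by rewrite (inj_eq cube_at_inj) eq_sym (negbTE ki).
Qed.

Lemma chain_vec_bd c : chain_in S c -> chain_vec (bd c) = chain_vec c *m bd_mx.
Proof.
move=> cS; apply/rowP => j; rewrite !mxE coef_bd rmorph_sum /=.
under [RHS]eq_bigr => i _ do rewrite !mxE.
rewrite (sum_coef_cube_at (fun Q => (coef (cube_bd Q) (cube_at j))%:~R)) //.
by under eq_bigr do rewrite rmorphM.
Qed.
End Support.
End Coordinates.
Arguments cells [d] U F _.

Section Homology.
Variables (d : nat) (U : seq (ecube d)) (S : rset d).
Hypotheses (U_uniq : uniq U) (S_in_U : forall Q, cube_in S Q -> Q \in U).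
Local Notation n := (size U).
Implicit Types (c : chain d) (k : nat).

Definition kcells k : pred 'I_n := cells U (kcube (cube_in S) k).
Definition cycle_mx k := (coord_mx (kcells k) :&: kermx (bd_mx U))%MS.
Definition boundary_mx k := coord_mx (kcells k.+1) *m bd_mx U.
Definition rat_betti k := (\rank (cycle_mx k) - \rank (boundary_mx k))%N.

Lemma is_chain_in k c : is_chain S k c -> chain_in S c.
Proof. by move=> cS p /cS[]. Qed.

Lemma chain_vec_sub k c : is_chain S k c -> (chain_vec U c <= coord_mx (kcells k))%MS.
Proof.
move=> cS; apply/coord_mx_subP => j /asboolPn jS; rewrite mxE /coef big1_seq //.
by move=> p /andP[/eqP pj /cS]; rewrite pj.
Qed.

Lemma cycle_vec_sub k z : is_cycle S k z -> (chain_vec U z <= cycle_mx k)%MS.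
Proof.
move=> [zS bdz]; rewrite sub_capmx chain_vec_sub //=; apply/sub_kermxP.
rewrite -(chain_vec_bd U_uniq S_in_U (is_chain_in zS)).
by apply/rowP => j; rewrite !mxE bdz.
Qed.

Lemma boundary_vec_sub k c : is_boundary S k c -> (chain_vec U c <= boundary_mx k)%MS.
Proof.
move=> [b [bS bdb]].
have -> : chain_vec U c = chain_vec U (bd b) by apply/rowP => j; rewrite !mxE bdb.
by rewrite (chain_vec_bd U_uniq S_in_U (is_chain_in bS)) submxMr ?chain_vec_sub.
Qed.

Lemma boundary_mx_sub k : (boundary_mx k <= cycle_mx k)%MS.
Proof.
apply/row_subP => i; rewrite row_mul row_coord_mx_mul.
case: (boolP (kcells k.+1 i)) => [/asboolP iS|_]; last by rewrite scale0r sub0mx.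
have bdS : is_chain S k (cube_bd (cube_at i)) by move=> p /(kcube_cube_bd iS).
have -> : row i (bd_mx U) = chain_vec U (cube_bd (cube_at i)) by apply/rowP => j; rewrite !mxE.
by rewrite scale1r cycle_vec_sub //; split=> // P; apply: coef_bd_cube_bd.
Qed.

Lemma chain_lift k (v : 'rV[rat]_n) : (v <= coord_mx (kcells k))%MS ->
  exists2 a : int, 0 < a & exists2 c, is_chain S k c & chain_vec U c = a%:~R *: v.
Proof.
move=> /coord_mx_subP vS; have [a a_gt0 [z az]] := int_row_scale v.
exists a => //; exists (chain_of z); last by rewrite (chain_vec_chain_of U_uniq) az.
move=> p /mapP[j]; rewrite mem_filter => /andP[zj _] ->.
suff /asboolP : kcells k j by [].
apply: contraNT zj => /vS vj; rewrite -(intr_eq0 rat).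
by have := congr1 (fun w : 'rV_n => w 0 j) az; rewrite !mxE vj mulr0 => <-.
Qed.

Lemma cycle_lift k (v : 'rV[rat]_n) : (v <= cycle_mx k)%MS ->
  exists2 a : int, 0 < a & exists2 z, is_cycle S k z & chain_vec U z = a%:~R *: v.
Proof.
rewrite sub_capmx => /andP[/chain_lift[a a_gt0 [z zS za]] /sub_kermxP vD].
exists a => //; exists z => //; split=> // P.
have zS' := is_chain_in zS.
rewrite (chain_vec_inj S_in_U (chain_in_bd zS') (c2 := [::])) ?/coef ?big_nil //.
rewrite (chain_vec_bd U_uniq S_in_U zS') za -scalemxAl vD scaler0.
by apply/rowP => j; rewrite !mxE /coef big_nil.
Qed.

Lemma boundary_lift k c : chain_in S c -> (chain_vec U c <= boundary_mx k)%MS ->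
  exists2 a : int, 0 < a & is_boundary S k (scalec a c).
Proof.
move=> cS /submxP[u cu].
have [a a_gt0 [b bS ba]] := chain_lift (submxMl u (coord_mx (kcells k.+1))).
exists a => //; exists b; split=> // P; apply: (chain_vec_inj S_in_U).
- by move=> p /mapP[p' p'c ->]; apply: cS _ p'c.
- exact: chain_in_bd (is_chain_in bS).
by rewrite chain_vec_scalec (chain_vec_bd U_uniq S_in_U (is_chain_in bS)) ba cu mulmxA scalemxAl.
Qed.

Lemma rat_betti_witness k : exists2 zs, size zs = rat_betti k & indep_hom S k zs.
Proof.
set Z := cycle_mx k; set B := boundary_mx k; set R := row_base (Z :\: B)%MS.
set r := \rank (Z :\: B)%MS.
have RZ : (R <= Z)%MS by rewrite eq_row_base diffmxSl.
have lift_row (i : 'I_r) : exists x : int * chain d,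
    [/\ 0 < x.1, is_cycle S k x.2 & chain_vec U x.2 = x.1%:~R *: row i R].
  have [a a_gt0 [z zS za]] := cycle_lift (submx_trans (row_sub i R) RZ).
  by exists (a, z).
have [f hf] := fin_all_exists lift_row.
set zs := [seq (f i).2 | i <- enum 'I_r].
have nth_zs (i : 'I_r) : nth [::] zs i = (f i).2.
  by rewrite (nth_map i) ?size_enum_ord // nth_ord_enum.
exists zs; first by rewrite size_map size_enum_ord /r mxrank_diff_sub // boundary_mx_sub.
split=> [_ /mapP[i _ ->] | cs hcs /boundary_vec_sub csB c csc]; first by have [] := hf i.
have size_cs : size cs = r by rewrite hcs size_map size_enum_ord.
pose w := \row_i ((cs`_i * (f i).1)%:~R : rat).
have w0 : w = 0.
  apply: (@indep_mod_row_base_diff _ _ _ _ Z B); rewrite -/R.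
  suff <- : chain_vec U (lincomb cs zs) = w *m R by [].
  rewrite chain_vec_lincomb // mulmx_sum_row size_map size_enum_ord.
  by apply: eq_bigr => i _; rewrite nth_zs; have [_ _ ->] := hf i; rewrite scalerA !mxE intrM.
have [i ics <-] := nthP 0 csc; rewrite size_cs in ics.
have := congr1 (fun v : 'rV_r => v 0 (Ordinal ics)) w0; rewrite !mxE /= => /eqP.
have [a_gt0 _ _] := hf (Ordinal ics).
by rewrite intr_eq0 mulf_eq0 (gt_eqF a_gt0) orbF => /eqP.
Qed.

Lemma indep_hom_size k zs : indep_hom S k zs -> (size zs <= rat_betti k)%N.
Proof.
move=> [zsC zsI]; set s := size zs.
pose M := \matrix_(i < s) chain_vec U (nth [::] zs i).
have zsS z : z \in zs -> chain_in S z by move=> /zsC[/is_chain_in].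
apply: (indep_mod_rank_leq (M := M)) (boundary_mx_sub k) _.
  by apply/row_subP => i; rewrite rowK; apply/cycle_vec_sub/zsC/mem_nth.
move=> w wB; have [a a_gt0 [z az]] := int_row_scale w.
set zl := [seq z i | i <- enum 'I_s].
have size_zl : size zl = s by rewrite size_map size_enum_ord.
have nth_zl (i : 'I_s) : zl`_i = z i by rewrite (nth_map i) ?size_enum_ord // nth_ord_enum.
have cS : chain_in S (lincomb zl zs) by apply: chain_in_lincomb.
have cB : (chain_vec U (lincomb zl zs) <= boundary_mx k)%MS.
  suff -> : chain_vec U (lincomb zl zs) = (a%:~R *: w) *m M by rewrite -scalemxAl scalemx_sub.
  rewrite chain_vec_lincomb // az mulmx_sum_row; apply: eq_bigr => i _.
  by rewrite rowK nth_zl mxE.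
have [a' a'_gt0 [b [bS bdb]]] := boundary_lift cS cB.
have zl0 : forall x, x \in [seq a' * x | x <- zl] -> x = 0.
  apply: zsI; first by rewrite size_map.
  by exists b; split=> // P; rewrite coef_lincomb_scale -coef_scalec.
apply/rowP => i; have /eqP : a' * z i = 0.
  by apply: zl0; rewrite map_f // -nth_zl mem_nth ?size_zl.
rewrite mulf_eq0 (gt_eqF a'_gt0) /= => /eqP zi0.
have /eqP := congr1 (fun v : 'rV_s => v 0 i) az.
by rewrite !mxE zi0 mulf_eq0 intr_eq0 (gt_eqF a_gt0) => /eqP.
Qed.

Theorem is_betti_rat_betti k : is_betti S k (rat_betti k).
Proof.
split; last exact: indep_hom_size.
by have [zs <- ?] := rat_betti_witness k; exists zs.
Qed.
End Homology.
Arguments kcells [d] U S k _.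

Section Monotone.
Variables (d : nat) (U : seq (ecube d)) (S S' : rset d).
Hypothesis SS' : forall Q, cube_in S Q -> cube_in S' Q.

Lemma kcellsS k : {subset kcells U S k <= kcells U S' k}.
Proof. by move=> j /asboolP[dimj jS]; apply/asboolP; split=> //; apply: SS'. Qed.

Lemma cycle_mxS k : (cycle_mx U S k <= cycle_mx U S' k)%MS.
Proof. by apply: capmxS => //; apply/coord_mxS/kcellsS. Qed.

Lemma boundary_mxS k : (boundary_mx U S k <= boundary_mx U S' k)%MS.
Proof. by apply/submxMr/coord_mxS/kcellsS. Qed.
End Monotone.

Definition cube_split d (T S : rset d) (F : ecube d -> Prop) : Prop :=
  forall Q, (cube_in T Q <-> cube_in S Q \/ F Q) /\ (F Q -> ~ cube_in S Q).

Definition added_bd_mx d (U : seq (ecube d)) (F : ecube d -> Prop) q :=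
  coord_mx (cells U (kcube F q.+1)) *m bd_mx U.

Section Difference.
Variables (d : nat) (U : seq (ecube d)) (T S : rset d) (F : ecube d -> Prop) (q : nat).
Hypotheses (U_uniq : uniq U) (T_in_U : forall Q, cube_in T Q -> Q \in U).
Hypothesis TSF : cube_split T S F.

Local Notation n := (size U).

Let S_in_U Q (QS : cube_in S Q) : Q \in U := T_in_U (proj2 (proj1 (TSF Q)) (or_introl QS)).

(* The cycles of S are the cycles of T vanishing on F, and the boundaries of T are
   those of S plus [added_bd_mx U F q]. *)
Lemma rat_betti_diff :
  (rat_betti U T q)%:Z - (rat_betti U S q)%:Z =
  (\rank (cycle_mx U T q *m coord_mx (cells U F)))%:Z - (\rank (added_bd_mx U F q))%:Z
  + (\rank (boundary_mx U S q :&: added_bd_mx U F q))%:Z.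
Proof.
set G := added_bd_mx U F q.
have kcells_S k : [predI kcells U T k & predC (cells U F)] =1 kcells U S k.
  move=> j; rewrite /kcells /cells !inE -asbool_neg -asbool_and; apply: asbool_equiv_eq.
  by have [TSFj FS] := TSF (cube_at j); rewrite /kcube TSFj; intuition.
have kcells_T k : kcells U T k =1 [predU kcells U S k & cells U (kcube F k)].
  move=> j; rewrite /kcells /cells !inE -asbool_or; apply: asbool_equiv_eq.
  by have [TSFj FS] := TSF (cube_at j); rewrite /kcube TSFj; intuition.
have cycles_S : (cycle_mx U T q :&: kermx (coord_mx (cells U F)) == cycle_mx U S q)%MS.
  apply/rV_eqP => v; rewrite !sub_capmx -andbA [(v <= kermx _)%MS && _]andbC andbA.
  by rewrite (sub_kermx (coord_mx _)) mul_coord_mx_eq0 sub_coord_mxI (eq_coord_mx (kcells_S q)).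
have cells_T : (coord_mx (kcells U T q.+1) :=:
                coord_mx (kcells U S q.+1) + (coord_mx (cells U (kcube F q.+1)) : 'M[rat]_n))%MS.
  by rewrite (eq_coord_mx (kcells_T _)); apply: coord_mx_predU.
have rank_BT : \rank (boundary_mx U T q) = \rank (boundary_mx U S q + G)%MS.
  by rewrite /boundary_mx (eqmxMr _ cells_T) addsmxMr.
have := mxrank_mul_ker (cycle_mx U T q) (coord_mx (cells U F)).
rewrite (eqmx_rank cycles_S).
have := mxrank_sum_cap (boundary_mx U S q) G.
have := mxrankS (boundary_mx_sub U_uniq T_in_U q).
have := mxrankS (boundary_mx_sub U_uniq S_in_U q).
rewrite /rat_betti rank_BT; lia.
Qed.
End Difference.

Lemma rat_betti_diff_mono d (U : seq (ecube d)) (T S T' S' : rset d) F q :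
  uniq U -> (forall Q, cube_in T' Q -> Q \in U) ->
  cube_split T S F -> cube_split T' S' F -> (forall Q, cube_in S Q -> cube_in S' Q) ->
  (rat_betti U T q)%:Z - (rat_betti U S q)%:Z <= (rat_betti U T' q)%:Z - (rat_betti U S' q)%:Z.
Proof.
move=> U_uniq T'_in_U TSF T'S'F SS'.
have TT' Q : cube_in T Q -> cube_in T' Q.
  by case: (TSF Q) (T'S'F Q) => [-> _] [-> _] [/SS'|]; [left | right].
rewrite (rat_betti_diff q U_uniq (fun Q QT => T'_in_U Q (TT' Q QT)) TSF).
rewrite (rat_betti_diff q U_uniq T'_in_U T'S'F).
have := mxrankS (submxMr (coord_mx (cells U F)) (cycle_mxS U TT' q)).
have := mxrankS (capmxS (boundary_mxS U SS' q) (submx_refl (added_bd_mx U F q))).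
lia.
Qed.

Lemma rat_betti_diff_le d (U : seq (ecube d)) (T S : rset d) F q (L : seq (ecube d)) :
  uniq U -> (forall Q, cube_in T Q -> Q \in U) -> cube_split T S F ->
  (forall Q, F Q -> Q \in L) ->
  (rat_betti U T q)%:Z - (rat_betti U S q)%:Z <= (size L)%:Z.
Proof.
move=> U_uniq T_in_U TSF FL; rewrite (rat_betti_diff q U_uniq T_in_U TSF).
have := mxrankM_maxr (cycle_mx U T q) (coord_mx (cells U F)).
have : (\rank (coord_mx (cells U F) : 'M[rat]_(size U)) <= #|cells U F|)%N.
  exact: rank_coord_mx.
have := card_cells U_uniq FL.
have := mxrankS (capmxSr (boundary_mx U S q) (added_bd_mx U F q)).
lia.
Qed.

Lemma is_betti_uniq d (S : rset d) k r r' : is_betti S k r -> is_betti S k r' -> r = r'.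
Proof.
move=> [[zs [<- zsI]] max] [[zs' [<- zs'I]] max'].
by apply/eqP; rewrite eqn_leq max' ?max.
Qed.

Lemma eventually_const_of_mono (I : Type) (le : I -> I -> Prop) (g : I -> int)
    (i0 : I) (c : int) :
  (forall i j k, le i j -> le j k -> le i k) -> le i0 i0 ->
  (forall i j, le i0 i -> le i j -> g i <= g j) -> (forall i, le i0 i -> g i <= c) ->
  exists2 i1, le i0 i1 & forall j, le i1 j -> g j = g i1.
Proof.
move=> le_trans le_i0 g_mono g_bound; apply: contrapT => unstable.
have grow n : exists2 i, le i0 i & g i0 + n%:Z <= g i.
  elim: n => [|n [i i0i gi]]; first by exists i0; rewrite ?addr0.
  have [j ij gji] : exists2 j, le i j & g j <> g i.
    apply: contrapT => stable; apply: unstable; exists i => // j ij.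
    by apply: contrapT => gji; apply: stable; exists j.
  exists j; first exact: le_trans i0i ij.
  have := g_mono i j i0i ij; lia.
have [i i0i] := grow (absz (c - g i0)).+1.
have := g_bound i i0i; have := g_bound i0 le_i0; lia.
Qed.

Section Boxes.
Variable d : nat.
Implicit Types (X W A : rset d) (x : 'I_d -> int) (m : nat) (Q : ecube d).

Definition box_cubes x m : seq (ecube d) :=
  let F := {ffun 'I_d -> 'I_(m.*2).+1 * bool} in
  undup [seq [ffun i => (x i - m%:Z + (f i).1%:Z, (f i).2)] | f : F <- enum F].

Lemma box_cubes_uniq x m : uniq (box_cubes x m).
Proof. exact: undup_uniq. Qed.

Lemma mem_box_cubes x m Q : cube_in (box x m) Q -> Q \in box_cubes x m.
Proof.
move=> QA; rewrite mem_undup; apply/mapP.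
have Q_bounds i : x i - m%:Z <= (Q i).1 /\ (Q i).1 + (Q i).2%:Z <= x i + m%:Z.
  have lo : cube_pts Q (fun t => ((Q t).1)%:~R).
    by move=> t; split; rewrite // ler_int lerDl.
  have hi : cube_pts Q (fun t => ((Q t).1 + (Q t).2%:Z)%:~R).
    by move=> t; split; rewrite // ler_int lerDl.
  by have [+ _] := QA _ lo i; have [_ +] := QA _ hi i; rewrite !ler_int.
exists [ffun i => (inord (absz ((Q i).1 - (x i - m%:Z))%R) : 'I_(m.*2).+1, (Q i).2)].
  by rewrite mem_enum.
apply/ffunP => i; rewrite !ffunE /=; have := Q_bounds i; case: (Q i) => l b /= [lo hi].
by rewrite inordK; [congr pair; lia | rewrite ltnS -mul2n; case: b hi => /=; lia].
Qed.

Lemma cube_in_setI X A Q : cube_in (setI_r X A) Q <-> cube_in X Q /\ cube_in A Q.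
Proof.
split=> [QXA | [QX QA] p Qp]; last by split; [apply: QX | apply: QA].
by split=> p /QXA[].
Qed.

Lemma cube_split_setI X W A : (forall p, W p -> X p) ->
  (forall Q, cube_in X Q -> ~ cube_in W Q -> cube_in A Q) ->
  cube_split (setI_r X A) (setI_r W A) (fun Q => cube_in X Q /\ ~ cube_in W Q).
Proof.
move=> WX XWA Q; rewrite !cube_in_setI; split=> [|[_ QW] [/QW]] //; split.
  by case=> QX QA; case: (pselect (cube_in W Q)) => QW; [left | right].
case=> [[QW QA] | [QX QW]]; last by split=> //; apply: XWA.
by split=> // p /QW /WX.
Qed.

Lemma cube_pts_dist Q p y i : cube_pts Q p -> cube_pts Q y -> `|y i - p i| <= 1.
Proof.
move=> /(_ i) + /(_ i); rewrite /intv_pts; case: (Q i) => l b /= [p1 p2] [y1 y2].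
have : (l + b%:Z)%:~R <= l%:~R + 1 :> R by rewrite intrD lerD2l; case: (b).
rewrite ler_norml; lra.
Qed.

Lemma cube_in_bounded_box X W : bounded_set (fun p => X p /\ ~ W p) ->
  exists m0, forall Q, cube_in X Q -> ~ cube_in W Q -> cube_in (box (fun=> 0) m0) Q.
Proof.
move=> [M XW_M]; pose m0 := Num.Def.archi_bound (`|M| + 1).
have M_m0 : `|M| + 1 < m0%:R :> R by apply: archi_boundP; rewrite addr_ge0.
exists m0 => Q QX QW y Qy i.
have [p [Qp pW]] : exists p, cube_pts Q p /\ ~ W p.
  apply: contrapT => none; apply: QW => z Qz; apply: contrapT => zW; apply: none.
  by exists z.
have := XW_M p (conj (QX p Qp) pW) i; have := cube_pts_dist i Qp Qy.
have := ler_norm M; rewrite sub0r add0r intrN -pmulrn !ler_norml; lra.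
Qed.
End Boxes.

Section Stabilization.
Variables (d q : nat).
Implicit Types (X W : rset d) (x : 'I_d -> int) (m : nat).

Definition betti_box X x m := rat_betti (box_cubes x m) (setI_r X (box x m)) q.

Lemma box_cubes_setI X x m x' m' : (forall p, box x m p -> box x' m' p) ->
  forall Q, cube_in (setI_r X (box x m)) Q -> Q \in box_cubes x' m'.
Proof. by move=> AA' Q /cube_in_setI[_ QA]; apply: mem_box_cubes => p /QA /AA'. Qed.

Lemma is_betti_box X x m : is_betti (setI_r X (box x m)) q (betti_box X x m).
Proof.
exact: is_betti_rat_betti (box_cubes_uniq x m) (box_cubes_setI (X := X) (fun _ => id)) q.
Qed.

Lemma betti_box_in X x m x' m' : (forall p, box x m p -> box x' m' p) ->
  rat_betti (box_cubes x' m') (setI_r X (box x m)) q = betti_box X x m.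
Proof.
move=> AA'; apply: (is_betti_uniq _ (is_betti_box X x m)).
exact: is_betti_rat_betti (box_cubes_uniq x' m') (box_cubes_setI (X := X) AA') q.
Qed.

Theorem betti_box_diff_stable X W : (forall p, W p -> X p) ->
  bounded_set (fun p => X p /\ ~ W p) ->
  exists x0 m0 (c : int), forall x m, (forall p, box x0 m0 p -> box x m p) ->
    (betti_box X x m)%:Z - (betti_box W x m)%:Z = c.
Proof.
move=> WX /cube_in_bounded_box[m0 XW_K].
pose le (A A' : ('I_d -> int) * nat) := forall p, box A.1 A.2 p -> box A'.1 A'.2 p.
pose g A := (betti_box X A.1 A.2)%:Z - (betti_box W A.1 A.2)%:Z.
have K_split A : le (fun=> 0, m0) A -> cube_split (setI_r X (box A.1 A.2))
    (setI_r W (box A.1 A.2)) (fun Q => cube_in X Q /\ ~ cube_in W Q).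
  by move=> KA; apply: cube_split_setI => // Q QX QW p /(XW_K Q QX QW) /KA.
have [[x1 m1] K_A1 stable] :
    exists2 A1, le (fun=> 0, m0) A1 & forall A, le A1 A -> g A = g A1.
  apply: (@eventually_const_of_mono _ le g _ (size (box_cubes (fun=> 0) m0))) => //.
  - by move=> A A' A'' AA' A'A'' p /AA' /A'A''.
  - move=> [x m] [x' m'] KA AA'.
    rewrite /g /= -(betti_box_in X AA') -(betti_box_in W AA').
    apply: (rat_betti_diff_mono q (box_cubes_uniq x' m') _ (K_split _ KA) (K_split (x', m') _)).
    + exact: box_cubes_setI (fun _ => id).
    + by move=> p /KA /AA'.
    + by move=> Q /cube_in_setI[QW QA]; apply/cube_in_setI; split=> // p /QA /AA'.
  - move=> [x m] KA; apply: (rat_betti_diff_le q (box_cubes_uniq x m) _ (K_split _ KA)).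
      exact: box_cubes_setI (fun _ => id).
    by move=> Q [QX QW]; apply/mem_box_cubes/XW_K.
by exists x1, m1, (g (x1, m1)) => x m A1A; apply: (stable (x, m)).
Qed.
End Stabilization.

Lemma box_sub_corners d (x x' : 'I_d -> int) (m m' : nat) :
  box x' m' (lattice_pt (fun i => x i - m%:Z)) ->
  box x' m' (lattice_pt (fun i => x i + m%:Z)) ->
  forall p, box x m p -> box x' m' p.
Proof.
move=> lo hi p xp i; have [+ _] := lo i; have [_ +] := hi i; have [] := xp i.
rewrite /lattice_pt; lra.
Qed.

Lemma eventually_box_sub d (xs : nat -> 'I_d -> int) (ms : nat -> nat) :
  (forall z, exists N, forall n, (N <= n)%N -> box (xs n) (ms n) (lattice_pt z)) ->
  forall x m, exists N, forall n, (N <= n)%N -> forall p, box x m p -> box (xs n) (ms n) p.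
Proof.
move=> exhaust x m.
have [N1 lo] := exhaust (fun i => x i - m%:Z); have [N2 hi] := exhaust (fun i => x i + m%:Z).
by exists (maxn N1 N2) => n n_large; apply: box_sub_corners; [apply: lo | apply: hi]; lia.
Qed.

Lemma bounded_setS d (A B : rset d) : (forall p, A p -> B p) -> bounded_set B -> bounded_set A.
Proof. by move=> AB [M BM]; exists M => p /AB /BM. Qed.

Theorem proposition4p2 (d q : nat) (X Y : rset d) :
  (q < d)%N -> cubical X -> cubical Y -> bounded_set (symdiff X Y) ->
  exists Delta : int,
    forall (xs : nat -> 'I_d -> int) (ms : nat -> nat),
      (forall z : 'I_d -> int, exists N : nat, forall n : nat, (N <= n)%N ->
         box (xs n) (ms n) (lattice_pt z)) ->
      exists n0 : nat, forall n : nat, (n0 <= n)%N ->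
        exists bX bY : nat,
          is_betti (setI_r X (box (xs n) (ms n))) q bX /\
          is_betti (setI_r Y (box (xs n) (ms n))) q bY /\
          bX%:Z - bY%:Z = Delta.
Proof.
move=> _ _ _ XY_bounded.
have XW : bounded_set (fun p => X p /\ ~ setI_r X Y p).
  by apply: bounded_setS XY_bounded => p [Xp XYp]; left; split=> // Yp; apply: XYp.
have YW : bounded_set (fun p => Y p /\ ~ setI_r X Y p).
  by apply: bounded_setS XY_bounded => p [Yp XYp]; right; split=> // Xp; apply: XYp.
have [x1 [m1 [c1 stableX]]] := betti_box_diff_stable q (fun p XYp => proj1 XYp) XW.
have [x2 [m2 [c2 stableY]]] := betti_box_diff_stable q (fun p XYp => proj2 XYp) YW.
exists (c1 - c2) => xs ms exhaust.
have [N1 A1] := eventually_box_sub exhaust x1 m1.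
have [N2 A2] := eventually_box_sub exhaust x2 m2.
exists (maxn N1 N2) => n n_large.
exists (betti_box q X (xs n) (ms n)), (betti_box q Y (xs n) (ms n)).
do 2 (split; first exact: is_betti_box).
have := stableX _ _ (A1 n (leq_trans (leq_maxl _ _) n_large)).
have := stableY _ _ (A2 n (leq_trans (leq_maxr _ _) n_large)).
lia.
Qed.
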